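(* For all positive integers $s,k$ and all nonnegative integers $t$, $$\binom{s+k-1}{s}\sum_{j=0}^{t}\binom{j+s-1}{s-1}\binom{j+k-1}{k-1}=\binom{t+s}{s}\sum_{j=0}^{k-1}\binom{j+s-1}{s-1}\binom{t+j}{j}.$$ *)

From mathcomp Require Import all_boot.

(* Put [a = s - 1], [b = k - 1] and let [R t] be the sum on the right.  Splitting
   [C(t+1+j, j)] by Pascal's rule and inducting on [b] gives the first-order
   recurrence [(a+t+2) R(t+1) = (t+1) R(t) + (a+b+1) C(a+b,a) C(t+1+b,b)],
   while [R 0 = C(a+b+1, a+1)] is the hockey-stick identity.  Multiplied by
   [C(t+1+a, a)], the recurrence is exactly the increment of the left-hand side
   from [t] to [t+1], so the theorem follows by induction on [t]. *)

From mathcomp Require Import all_boot.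
From mathcomp Require Import zify.

Lemma bin_addC m n : 'C(m + n, m) = 'C(m + n, n).
Proof. by rewrite -(bin_sub (leq_addl m n)) addnK. Qed.

Lemma mul_bin_addS m n : (m + n).+1 * 'C(m + n, m) = n.+1 * 'C(m + n.+1, m).
Proof. by rewrite bin_addC mul_bin_diag (bin_addC m n.+1) addnS. Qed.

Lemma sum_bin_hockey_stick a b :
  \sum_(0 <= j < b.+1) 'C(j + a, a) = 'C(a + b.+1, a.+1).
Proof.
elim: b => [|b IH]; first by rewrite big_nat1 add0n addn1 !binn.
by rewrite big_nat_recr //= IH [in RHS]addnS binS (addnC b.+1).
Qed.

Definition bin_conv a b t := \sum_(0 <= j < b.+1) 'C(j + a, a) * 'C(t + j, j).

Lemma bin_conv0 a b : bin_conv a b 0 = 'C(a + b.+1, a.+1).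
Proof.
rewrite /bin_conv -sum_bin_hockey_stick.
by apply: eq_bigr => j _; rewrite add0n binn muln1.
Qed.

Lemma bin_convS a b t :
  bin_conv a b.+1 t = bin_conv a b t + 'C(a + b.+1, a) * 'C(t + b.+1, b.+1).
Proof. by rewrite /bin_conv big_nat_recr // addnC. Qed.

Lemma bin_conv_recurrence a b t :
  (a + t).+2 * bin_conv a b t.+1 =
  t.+1 * bin_conv a b t + (a + b).+1 * 'C(a + b, a) * 'C(t.+1 + b, b).
Proof.
elim: b => [|b IH].
  by rewrite /bin_conv !big_nat1 !addn0 !binn !bin0 !muln1; lia.
have pascal : 'C(t.+1 + b.+1, b.+1) = 'C(t + b.+1, b) + 'C(t + b.+1, b.+1).
  by rewrite addSn binS addnC.
have absorb : t.+1 * 'C(t + b.+1, b) = b.+1 * 'C(t + b.+1, b.+1).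
  by rewrite mul_bin_left; congr (_ * _); lia.
have shift : 'C(t.+1 + b, b) = 'C(t + b.+1, b) by rewrite addSn addnS.
have := mul_bin_addS a b.
rewrite !bin_convS pascal; rewrite shift in IH *.
nia.
Qed.

Lemma bin_conv_sum_identity a b t :
  'C(a + b.+1, a.+1) * (\sum_(0 <= j < t.+1) 'C(j + a, a) * 'C(j + b, b))
  = 'C(t + a.+1, a.+1) * bin_conv a b t.
Proof.
elim: t => [|t IH].
  by rewrite big_nat1 bin_conv0 !add0n !binn !muln1 mul1n.
rewrite big_nat_recr //= mulnDr IH.
have top : a.+1 * 'C(a + b.+1, a.+1) = (a + b).+1 * 'C(a + b, a).
  by rewrite -mul_bin_diag addnS.
have step : a.+1 * 'C(t + a.+1, a.+1) = t.+1 * 'C(t.+1 + a, a).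
  by rewrite mul_bin_left; congr (_ * 'C(_, _)); lia.
have next : a.+1 * 'C(t.+1 + a.+1, a.+1) = (a + t).+2 * 'C(t.+1 + a, a).
  by rewrite -mul_bin_diag !addSn addnS addnC.
apply/eqP; rewrite -(eqn_pmul2l (ltn0Sn a)); apply/eqP.
rewrite mulnDr !mulnA step top next -!mulnA !(mulnCA _ 'C(t.+1 + a, a)) -mulnDr.
by rewrite bin_conv_recurrence !mulnA.
Qed.

Theorem mainTheorem10 (s k t : nat) (hs : 0 < s) (hk : 0 < k) :
  'C(s + k - 1, s) * (\sum_(0 <= j < t.+1) 'C(j + s - 1, s - 1) * 'C(j + k - 1, k - 1))
  = 'C(t + s, s) * (\sum_(0 <= j < k) 'C(j + s - 1, s - 1) * 'C(t + j, j)).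
Proof.
case: s hs => // a _; case: k hk => // b _.
have pred_add j n : j + n.+1 - 1 = j + n by rewrite addnS subn1.
rewrite pred_add addSn -addnS !subn1 /=.
under eq_bigr do rewrite !pred_add.
under [in RHS]eq_bigr do rewrite pred_add.
exact: bin_conv_sum_identity.
Qed.
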